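(* Let $\phi:[0,\infty)\to\mathbb R$ be convex, differentiable and bounded below, with $\phi'(0)<0$, and let $c_{II}\in(0,1)$ and $\rho_0>0$. Consider the following interval-based bisection line search: set $\rho_L=0$, $\rho_U=\infty$, and for $i=0,1,2,\dots$: if $|\phi'(\rho_i)|\le -c_{II}\phi'(0)$, stop and output $\rho^*=\rho_i$; otherwise, if $\phi'(\rho_i)>0$ set $\rho_U=\rho_i$, and if $\phi'(\rho_i)<0$ set $\rho_L=\rho_i$; then set $\rho_{i+1}=2\rho_L$ if $\rho_U=\infty$, and $\rho_{i+1}=\frac12(\rho_L+\rho_U)$ otherwise. Then this procedure stops after finitely many iterations, and its output $\rho^*$ satisfies the strong Wolfe condition $|\phi'(\rho^* )|\le -c_{II}\phi'(0)$.
   Context: In the application, $\phi(\rho)=\mathcal F(h_t+\rho z_t)$ for a convex differentiable objective $\mathcal F$ and a descent direction $z_t$, but the statement concerns an arbitrary $\phi$ as described. *)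

From Stdlib Require Import Reals Lra.
From Coquelicot Require Import Coquelicot.
Open Scope R_scope.

(* State of the interval-based bisection line search:
   (rho_L, rho_U, rho_i) where rho_U = None encodes rho_U = +infinity. *)
Record ls_state := LS { ls_L : R; ls_U : option R; ls_rho : R }.

Definition strong_wolfe (dphi : R -> R) (c rho : R) : Prop :=
  Rabs (dphi rho) <= - c * dphi 0.

(* One update of the algorithm (performed when the stopping test fails). *)
Definition ls_step (dphi : R -> R) (s : ls_state) : ls_state :=
  let r := ls_rho s in
  let L' := if Rlt_dec (dphi r) 0 then r else ls_L s in
  let U' := if Rlt_dec 0 (dphi r) then Some r else ls_U s in
  let r' := match U' with
            | None => 2 * L'
            | Some u => (L' + u) / 2
            end in
  LS L' U' r'.

Definition ls_iter (dphi : R -> R) (rho0 : R) (i : nat) : ls_state :=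
  Nat.iter i (ls_step dphi) (LS 0 None rho0).

Definition ls_rho_i (dphi : R -> R) (rho0 : R) (i : nat) : R :=
  ls_rho (ls_iter dphi rho0 i).

Definition convex_on_nonneg (phi : R -> R) : Prop :=
  forall x y t, 0 <= x -> 0 <= y -> 0 <= t <= 1 ->
    phi (t * x + (1 - t) * y) <= t * phi x + (1 - t) * phi y.

Definition is_derive_on_nonneg (phi dphi : R -> R) : Prop :=
  (forall x, 0 < x -> is_derive phi x (dphi x)) /\
  filterlim (fun h => (phi h - phi 0) / h) (at_right 0) (locally (dphi 0)).

From Stdlib Require Import Reals Lra Lia Classical Wf_nat.
From Coquelicot Require Import Coquelicot.
Open Scope R_scope.

(* Put a := - cII * phi'(0) > 0 and suppose every trial step fails, i.e.
   |phi'(rho_i)| > a.  As long as rho_U = oo the steps double and satisfy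
   phi'(rho_i) < -a, hence phi(rho_i) <= phi(0) - a rho_i, which contradicts
   the lower bound on phi.  Once rho_U is finite, [rho_L, rho_U] is halved at
   every step while phi'(rho_L) < -a < a < phi'(rho_U); the nested brackets
   shrink to a point across which phi' would jump by 2a, impossible because
   the derivative of a differentiable convex function is continuous. *)

Lemma at_right_interval (d : R) : 0 < d -> at_right 0 (fun h => 0 < h < d).
Proof.
  intros Hd; exists (mkposreal d Hd); intros h Hball Hh; simpl in *.
  change (Rabs (h - 0) < d) in Hball.
  rewrite Rminus_0_r, Rabs_pos_eq in Hball; lra.
Qed.

Lemma nested_intervals (L U : nat -> R) :
  Un_growing L -> Un_decreasing U -> (forall k, L k <= U k) ->
  exists x, forall k, L k <= x <= U k.
Proof.
  intros HL HU HLU.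
  assert (Hcross : forall j k, L j <= U k).
  { intros j k; destruct (Nat.le_ge_cases j k) as [Hjk | Hkj].
    - pose proof (growing_prop L k j HL Hjk); pose proof (HLU k); lra.
    - pose proof (decreasing_prop U k j HU Hkj); pose proof (HLU j); lra. }
  destruct (completeness (EUn L)) as [x [Hub Hlub]].
  - exists (U 0%nat); intros r [j ->]; apply Hcross.
  - exists (L 0%nat), 0%nat; reflexivity.
  - exists x; intros k; split.
    + apply Hub; now exists k.
    + apply Hlub; intros r [j ->]; apply Hcross.
Qed.

Lemma doubling_unbounded (r : nat -> R) M :
  0 < r 0%nat -> (forall n, r (S n) = 2 * r n) -> exists n, M < r n.
Proof.
  intros Hr0 Hr.
  assert (Hpow : forall n, r n = r 0%nat * 2 ^ n)
    by (induction n as [| n IH]; simpl; [ring | rewrite Hr, IH; ring]).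
  destruct (pow_2_n_infty (M / r 0%nat)) as [n Hn].
  specialize (Hn n (le_n n)); unfold pow_2_n in Hn.
  apply Rlt_div_l in Hn; [| lra].
  exists n; rewrite Hpow; lra.
Qed.

Lemma halving_vanishes (w : nat -> R) d :
  0 < d -> (forall n, w (S n) = w n / 2) -> exists n, w n < d.
Proof.
  intros Hd Hw.
  assert (Hpow : forall n, w n * 2 ^ n = w 0%nat)
    by (induction n as [| n IH]; simpl; [ring | rewrite Hw, <- IH; field]).
  destruct (doubling_unbounded (fun n => d * 2 ^ n) (w 0%nat)) as [n Hn];
    [simpl; lra | intros n; simpl; ring |].
  exists n; apply Rmult_lt_reg_r with (2 ^ n); [apply pow_lt; lra |].
  now rewrite Hpow.
Qed.

Lemma classical_least_nat (P : nat -> Prop) :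
  (exists n, P n) -> exists n, P n /\ forall k, (k < n)%nat -> ~ P k.
Proof.
  intros Hex.
  destruct (dec_inh_nat_subset_has_unique_least_element P (fun n => classic (P n)) Hex)
    as [n [[Hn Hleast] _]].
  exists n; split; [exact Hn |]; intros k Hk HPk.
  specialize (Hleast k HPk); lia.
Qed.

Section ConvexDerivative.

Variables phi dphi : R -> R.
Hypothesis phi_convex : convex_on_nonneg phi.
Hypothesis phi_derive : is_derive_on_nonneg phi dphi.

Lemma convex_secant x y t : 0 <= x -> 0 <= y -> 0 <= t <= 1 ->
  phi (x + t * (y - x)) <= phi x + t * (phi y - phi x).
Proof.
  intros Hx Hy Ht.
  replace (x + t * (y - x)) with (t * y + (1 - t) * x) by ring.
  generalize (phi_convex y x t Hy Hx Ht); lra.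
Qed.

Lemma secant_frac_range x y h : x < y -> 0 < h <= y - x -> 0 <= h / (y - x) <= 1.
Proof.
  intros Hxy Hh; split.
  - apply Rdiv_le_0_compat; lra.
  - apply Rle_div_l; lra.
Qed.

Lemma right_quotient_le_secant x y h : 0 <= x -> x < y -> 0 < h <= y - x ->
  (phi (x + h) - phi x) / h <= (phi y - phi x) / (y - x).
Proof.
  intros Hx Hxy Hh.
  generalize (convex_secant x y (h / (y - x)) Hx ltac:(lra) (secant_frac_range x y h Hxy Hh)).
  replace (x + h / (y - x) * (y - x)) with (x + h) by (field; lra).
  intros Hc; apply Rle_div_l; [lra |].
  replace ((phi y - phi x) / (y - x) * h) with (h / (y - x) * (phi y - phi x))
    by (field; lra).
  lra.
Qed.

Lemma secant_le_left_quotient x y h : 0 <= x -> x < y -> 0 < h <= y - x ->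
  (phi y - phi x) / (y - x) <= (phi y - phi (y - h)) / h.
Proof.
  intros Hx Hxy Hh.
  generalize (convex_secant y x (h / (y - x)) ltac:(lra) Hx (secant_frac_range x y h Hxy Hh)).
  replace (y + h / (y - x) * (x - y)) with (y - h) by (field; lra).
  intros Hc; apply (Rle_div_r _ _ h); [lra |].
  replace ((phi y - phi x) / (y - x) * h) with (h / (y - x) * (phi y - phi x))
    by (field; lra).
  lra.
Qed.

Lemma right_quotient_lim x : 0 <= x ->
  filterlim (fun h => (phi (x + h) - phi x) / h) (at_right 0) (locally (dphi x)).
Proof.
  intros Hx; destruct (Rle_lt_or_eq_dec 0 x Hx) as [Hpos | <-].
  - apply filterlim_locally; intros eps.
    destruct (proj1 (is_derive_Reals _ _ _) (proj1 phi_derive x Hpos) eps (cond_pos eps))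
      as [d Hd].
    exists d; intros h Hball Hh.
    change (Rabs (h - 0) < d) in Hball; rewrite Rminus_0_r in Hball.
    apply Hd; [lra | exact Hball].
  - eapply filterlim_ext; [| exact (proj2 phi_derive)].
    intros h; simpl; now rewrite Rplus_0_l.
Qed.

Lemma left_quotient_lim x : 0 < x ->
  filterlim (fun h => (phi x - phi (x - h)) / h) (at_right 0) (locally (dphi x)).
Proof.
  intros Hx; apply filterlim_locally; intros eps.
  destruct (proj1 (is_derive_Reals _ _ _) (proj1 phi_derive x Hx) eps (cond_pos eps))
    as [d Hd].
  exists d; intros h Hball Hh.
  change (Rabs (h - 0) < d) in Hball; rewrite Rminus_0_r in Hball.
  change (Rabs ((phi x - phi (x - h)) / h - dphi x) < eps).
  replace ((phi x - phi (x - h)) / h) with ((phi (x + - h) - phi x) / - h)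
    by (unfold Rminus; field; lra).
  apply Hd; [lra | now rewrite Rabs_Ropp].
Qed.

Lemma derive_mul_le_secant x y : 0 <= x <= y -> dphi x * (y - x) <= phi y - phi x.
Proof.
  intros [Hx Hxy]; destruct (Rle_lt_or_eq_dec x y Hxy) as [Hlt | <-]; [| lra].
  assert (Hle : Rbar_le (dphi x) ((phi y - phi x) / (y - x))).
  { apply (filterlim_le (F := at_right 0)
      (fun h => (phi (x + h) - phi x) / h) (fun _ => (phi y - phi x) / (y - x)));
      [| now apply right_quotient_lim | apply filterlim_const].
    apply (filter_imp (fun h => 0 < h < y - x)); [| apply at_right_interval; lra].
    intros h Hh; apply right_quotient_le_secant; lra. }
  simpl in Hle; apply Rle_div_r in Hle; lra.
Qed.

Lemma secant_le_derive_mul x y : 0 <= x <= y -> phi y - phi x <= dphi y * (y - x).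
Proof.
  intros [Hx Hxy]; destruct (Rle_lt_or_eq_dec x y Hxy) as [Hlt | <-]; [| lra].
  assert (Hle : Rbar_le ((phi y - phi x) / (y - x)) (dphi y)).
  { apply (filterlim_le (F := at_right 0)
      (fun _ => (phi y - phi x) / (y - x)) (fun h => (phi y - phi (y - h)) / h));
      [| apply filterlim_const | apply left_quotient_lim; lra].
    apply (filter_imp (fun h => 0 < h < y - x)); [| apply at_right_interval; lra].
    intros h Hh; apply secant_le_left_quotient; lra. }
  simpl in Hle; apply Rle_div_l in Hle; lra.
Qed.

Lemma derive_nondecreasing x y : 0 <= x <= y -> dphi x <= dphi y.
Proof.
  intros Hxy; destruct (Rle_lt_or_eq_dec x y (proj2 Hxy)) as [Hlt | <-]; [| lra].
  generalize (derive_mul_le_secant x y Hxy) (secant_le_derive_mul x y Hxy).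
  intros H1 H2; apply Rmult_le_reg_r with (y - x); lra.
Qed.

Lemma right_quotient_upper x eps : 0 <= x -> 0 < eps ->
  exists h, 0 < h /\ phi (x + h) - phi x < (dphi x + eps) * h.
Proof.
  intros Hx Heps.
  pose proof (proj1 (filterlim_locally _ _) (right_quotient_lim x Hx) (mkposreal eps Heps))
    as Hnear.
  destruct (filter_ex _ (filter_and _ _ Hnear (at_right_interval 1 Rlt_0_1)))
    as [h [Hball Hh]].
  change (Rabs ((phi (x + h) - phi x) / h - dphi x) < eps) in Hball.
  apply Rabs_lt_between' in Hball as [_ Hq].
  exists h; split; [lra |].
  apply Rlt_div_l; lra.
Qed.

Lemma left_quotient_lower x eps : 0 < x -> 0 < eps ->
  exists h, 0 < h < x /\ (dphi x - eps) * h < phi x - phi (x - h).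
Proof.
  intros Hx Heps.
  pose proof (proj1 (filterlim_locally _ _) (left_quotient_lim x Hx) (mkposreal eps Heps))
    as Hnear.
  destruct (filter_ex _ (filter_and _ _ Hnear (at_right_interval x Hx)))
    as [h [Hball Hh]].
  change (Rabs ((phi x - phi (x - h)) / h - dphi x) < eps) in Hball.
  apply Rabs_lt_between' in Hball as [Hq _].
  exists h; split; [lra |].
  apply (Rlt_div_r _ _ h); lra.
Qed.

Lemma derive_right_continuous x eps : 0 <= x -> 0 < eps ->
  exists d, 0 < d /\ forall y, x <= y < x + d -> dphi y < dphi x + eps.
Proof.
  intros Hx Heps.
  destruct (right_quotient_upper x (eps / 2) Hx ltac:(lra)) as [h [Hh Hq]].
  exists (h / 2); split; [lra |]; intros y Hy.
  pose proof (derive_mul_le_secant y (x + h) ltac:(lra)) as Hy_right.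
  pose proof (derive_mul_le_secant x y ltac:(lra)) as Hx_right.
  assert (Hslack : eps * (h / 2) <= eps * (x + h - y)) by (apply Rmult_le_compat_l; lra).
  apply Rmult_lt_reg_r with (x + h - y); lra.
Qed.

Lemma derive_left_continuous x eps : 0 <= x -> 0 < eps ->
  exists d, 0 < d /\ forall y, 0 <= y -> x - d < y <= x -> dphi x - eps < dphi y.
Proof.
  intros Hx Heps; destruct (Rle_lt_or_eq_dec 0 x Hx) as [Hpos | <-].
  - destruct (left_quotient_lower x (eps / 2) Hpos ltac:(lra)) as [h [Hh Hq]].
    exists (h / 2); split; [lra |]; intros y Hy0 Hy.
    pose proof (secant_le_derive_mul (x - h) y ltac:(lra)) as Hy_left.
    pose proof (secant_le_derive_mul y x ltac:(lra)) as Hx_left.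
    assert (Hslack : eps * (h / 2) <= eps * (y - (x - h)))
      by (apply Rmult_le_compat_l; lra).
    apply Rmult_lt_reg_r with (y - (x - h)); lra.
  - exists 1; split; [lra |]; intros y Hy0 Hy.
    replace y with 0 by lra; lra.
Qed.

Lemma derive_continuous x eps : 0 <= x -> 0 < eps ->
  exists d, 0 < d /\
    forall y, 0 <= y -> Rabs (y - x) < d -> Rabs (dphi y - dphi x) < eps.
Proof.
  intros Hx Heps.
  destruct (derive_right_continuous x eps Hx Heps) as [dR [HdR Hright]].
  destruct (derive_left_continuous x eps Hx Heps) as [dL [HdL Hleft]].
  exists (Rmin dR dL); split; [now apply Rmin_pos |]; intros y Hy Hyx.
  apply Rabs_lt_between' in Hyx.
  pose proof (Rmin_l dR dL); pose proof (Rmin_r dR dL).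
  apply Rabs_lt_between'; destruct (Rle_or_lt x y) as [Hxy | Hyx'].
  - pose proof (derive_nondecreasing x y (conj Hx Hxy)).
    pose proof (Hright y ltac:(lra)); lra.
  - pose proof (derive_nondecreasing y x (conj Hy (Rlt_le _ _ Hyx'))).
    pose proof (Hleft y Hy ltac:(lra)); lra.
Qed.

Lemma no_derive_gap_on_shrinking_nest (L U : nat -> R) eps :
  0 < eps -> 0 <= L 0%nat -> Un_growing L -> Un_decreasing U ->
  (forall k, L k <= U k) -> (forall d, 0 < d -> exists k, U k - L k < d) ->
  ~ (forall k, eps < dphi (U k) - dphi (L k)).
Proof.
  intros Heps HL0 HL HU HLU Hshrink Hgap.
  destruct (nested_intervals L U HL HU HLU) as [x Hx].
  assert (Hx0 : 0 <= x) by (pose proof (Hx 0%nat); lra).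
  destruct (derive_continuous x (eps / 2) Hx0 ltac:(lra)) as [d [Hd Hcont]].
  destruct (Hshrink d Hd) as [k Hk].
  pose proof (growing_prop L k 0 HL (Nat.le_0_l k)) as HLk.
  specialize (Hx k); specialize (Hgap k).
  pose proof (Hcont (L k) ltac:(lra) ltac:(apply Rabs_lt_between'; lra)) as HcontL.
  pose proof (Hcont (U k) ltac:(lra) ltac:(apply Rabs_lt_between'; lra)) as HcontU.
  apply Rabs_lt_between' in HcontL, HcontU; lra.
Qed.

Lemma descent_bounded_below m a y : (forall x, 0 <= x -> m <= phi x) ->
  0 <= y -> dphi y <= - a -> a * y <= phi 0 - m.
Proof.
  intros Hm Hy Hslope.
  pose proof (secant_le_derive_mul 0 y (conj (Rle_refl 0) Hy)) as Hsec.
  pose proof (Rmult_le_compat_r y _ _ Hy Hslope).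
  pose proof (Hm y Hy); lra.
Qed.

End ConvexDerivative.

Definition ls_upper (s : ls_state) : R :=
  match ls_U s with Some u => u | None => 0 end.

Definition ls_expanding (dphi : R -> R) (a : R) (s : ls_state) : Prop :=
  ls_U s = None /\ 0 <= ls_L s < ls_rho s /\ dphi (ls_L s) < - a.

Definition ls_bracketing (dphi : R -> R) (a : R) (s : ls_state) (u : R) : Prop :=
  ls_U s = Some u /\ 0 <= ls_L s < u /\ dphi (ls_L s) < - a /\ a < dphi u /\
  ls_rho s = (ls_L s + u) / 2.

Lemma ls_bracketing_upper dphi a s u : ls_bracketing dphi a s u -> ls_upper s = u.
Proof. intros [HU _]; unfold ls_upper; now rewrite HU. Qed.

Section LineSearchStep.

Variables (dphi : R -> R) (a : R).
Hypothesis a_nonneg : 0 <= a.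

Lemma ls_step_expanding s :
  ls_expanding dphi a s -> a < Rabs (dphi (ls_rho s)) ->
  (ls_expanding dphi a (ls_step dphi s) /\ dphi (ls_rho s) < - a /\
   ls_rho (ls_step dphi s) = 2 * ls_rho s)
  \/ ls_bracketing dphi a (ls_step dphi s) (ls_rho s).
Proof.
  intros [HU [HL Hd]] Hfail; destruct s as [L U r]; simpl in *; subst U.
  unfold ls_step, ls_expanding, ls_bracketing; simpl.
  destruct (Rlt_dec (dphi r) 0) as [Hneg | Hneg];
    destruct (Rlt_dec 0 (dphi r)) as [Hpos | Hpos]; simpl.
  - lra.
  - left; rewrite Rabs_left in Hfail by lra; repeat split; lra.
  - right; rewrite Rabs_pos_eq in Hfail by lra; repeat split; lra.
  - rewrite Rabs_pos_eq in Hfail by lra; lra.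
Qed.

Lemma ls_step_bracketing s u :
  ls_bracketing dphi a s u -> a < Rabs (dphi (ls_rho s)) ->
  ls_bracketing dphi a (ls_step dphi s) (ls_upper (ls_step dphi s)) /\
  ls_L s <= ls_L (ls_step dphi s) /\ ls_upper (ls_step dphi s) <= u /\
  ls_upper (ls_step dphi s) - ls_L (ls_step dphi s) = (u - ls_L s) / 2.
Proof.
  intros [HU [HL [HdL [HdU Hr]]]] Hfail; destruct s as [L U r]; simpl in *; subst U r.
  unfold ls_step, ls_bracketing, ls_upper; simpl.
  destruct (Rlt_dec (dphi ((L + u) / 2)) 0) as [Hneg | Hneg];
    destruct (Rlt_dec 0 (dphi ((L + u) / 2))) as [Hpos | Hpos]; simpl.
  - lra.
  - rewrite Rabs_left in Hfail by lra; repeat split; lra.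
  - rewrite Rabs_pos_eq in Hfail by lra; repeat split; lra.
  - rewrite Rabs_pos_eq in Hfail by lra; lra.
Qed.

End LineSearchStep.

Section FailingLineSearch.

Variables (phi dphi : R -> R) (a rho0 : R).
Hypothesis phi_convex : convex_on_nonneg phi.
Hypothesis phi_derive : is_derive_on_nonneg phi dphi.
Hypothesis a_pos : 0 < a.
Hypothesis ls_fails : forall n, a < Rabs (dphi (ls_rho_i dphi rho0 n)).

Local Notation run := (ls_iter dphi rho0).

Lemma ls_run_invariant n : dphi 0 < - a -> 0 < rho0 ->
  ls_expanding dphi a (run n) \/ exists u, ls_bracketing dphi a (run n) u.
Proof.
  intros Hd0 Hrho0; induction n as [| n [Hexp | [u Hbr]]].
  - left; unfold ls_expanding; simpl; repeat split; lra.
  - destruct (ls_step_expanding dphi a (Rlt_le _ _ a_pos) (run n) Hexp (ls_fails n))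
      as [[Hexp' _] | Hbr']; [left | right; eexists]; eassumption.
  - right; eexists.
    exact (proj1 (ls_step_bracketing dphi a (Rlt_le _ _ a_pos) (run n) u Hbr (ls_fails n))).
Qed.

Lemma ls_expansion_not_endless m : (forall x, 0 <= x -> m <= phi x) -> 0 < rho0 ->
  ~ (forall n, ls_expanding dphi a (run n)).
Proof.
  intros Hm Hrho0 Hexp.
  assert (Hdouble : forall n,
    dphi (ls_rho (run n)) < - a /\ ls_rho (run (S n)) = 2 * ls_rho (run n)).
  { intros n.
    destruct (ls_step_expanding dphi a (Rlt_le _ _ a_pos) (run n) (Hexp n) (ls_fails n))
      as [[_ H] | [HU _]]; [exact H |].
    destruct (Hexp (S n)) as [HU' _].
    change (ls_U (ls_step dphi (run n)) = None) in HU'; congruence. }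
  destruct (doubling_unbounded (fun n => ls_rho (run n)) ((phi 0 - m) / a)) as [n Hn];
    [exact Hrho0 | intros n; apply Hdouble |].
  destruct (Hexp n) as [_ [HL _]].
  pose proof (descent_bounded_below phi dphi phi_convex phi_derive m a (ls_rho (run n)) Hm
    ltac:(lra) (Rlt_le _ _ (proj1 (Hdouble n)))).
  apply Rlt_div_l in Hn; lra.
Qed.

Lemma ls_not_bracketing N u : ~ ls_bracketing dphi a (run N) u.
Proof.
  intros Hstart.
  set (t := fun k => run (N + k)%nat).
  assert (Ht : forall k, t (S k) = ls_step dphi (t k))
    by (intros k; unfold t, ls_iter; now rewrite Nat.add_succ_r).
  set (L := fun k => ls_L (t k)); set (U := fun k => ls_upper (t k)).
  assert (Hbr : forall k, ls_bracketing dphi a (t k) (U k)).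
  { induction k as [| k IH].
    - unfold U, t; rewrite Nat.add_0_r, (ls_bracketing_upper _ _ _ _ Hstart); exact Hstart.
    - unfold U; rewrite Ht.
      exact (proj1 (ls_step_bracketing dphi a (Rlt_le _ _ a_pos) _ _ IH (ls_fails (N + k)))). }
  assert (Hstep : forall k,
    L k <= L (S k) /\ U (S k) <= U k /\ U (S k) - L (S k) = (U k - L k) / 2).
  { intros k; unfold L, U; rewrite Ht.
    exact (proj2 (ls_step_bracketing dphi a (Rlt_le _ _ a_pos) _ _ (Hbr k)
      (ls_fails (N + k)))). }
  apply (no_derive_gap_on_shrinking_nest phi dphi phi_convex phi_derive L U (2 * a));
    [lra | apply (Hbr 0%nat) | intros k; apply Hstep | intros k; apply Hstep
    | intros k; apply Rlt_le, (Hbr k) | |].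
  - intros d Hd; apply (halving_vanishes (fun k => U k - L k) d Hd); intros k; apply Hstep.
  - intros k; destruct (Hbr k) as (_ & _ & HdL & HdU & _); unfold L; lra.
Qed.

End FailingLineSearch.

Theorem theorem4 (phi dphi : R -> R) (cII rho0 : R) :
  convex_on_nonneg phi ->
  is_derive_on_nonneg phi dphi ->
  (exists m, forall x, 0 <= x -> m <= phi x) ->
  dphi 0 < 0 ->
  0 < cII < 1 ->
  0 < rho0 ->
  exists n : nat,
    strong_wolfe dphi cII (ls_rho_i dphi rho0 n) /\
    (forall k : nat, (k < n)%nat -> ~ strong_wolfe dphi cII (ls_rho_i dphi rho0 k)).
Proof.
  intros Hconv Hder [m Hm] Hd0 Hc Hrho0.
  apply classical_least_nat, NNPP; intros Hnever.
  set (a := - cII * dphi 0).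
  assert (Ha : 0 < a) by (unfold a; nra).
  assert (Hstart : dphi 0 < - a) by (unfold a; nra).
  assert (Hfail : forall n, a < Rabs (dphi (ls_rho_i dphi rho0 n))).
  { intros n; apply Rnot_le_lt; intros Hw; apply Hnever; now exists n. }
  destruct (classic (forall n, ls_expanding dphi a (ls_iter dphi rho0 n))) as [Hexp | Hnot].
  - exact (ls_expansion_not_endless phi dphi a rho0 Hconv Hder Ha Hfail m Hm Hrho0 Hexp).
  - apply not_all_ex_not in Hnot as [N HN].
    destruct (ls_run_invariant dphi a rho0 Ha Hfail N Hstart Hrho0) as [| [u Hu]];
      [contradiction |].
    exact (ls_not_bracketing phi dphi a rho0 Hconv Hder Ha Hfail N u Hu).
Qed.
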